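(* Let $2\leq\alpha,\beta\leq\omega$. Then there is a recursive set $\Theta$ of first-order sentences in the signature of posets (one binary relation $\leq$) such that for every countable poset $P$, $P\models\Theta$ if and only if $P$ is $(\alpha,\beta)$-representable.
   Context: The result is asserted to hold in ZF, without any form of the Axiom of Choice. A poset $P$ is $(\alpha,\beta)$-representable if there is a set $X$ and an order embedding $h:P\to\wp(X)$ ($\wp(X)$ ordered by inclusion) such that whenever $S\subseteq P$ with $|S|<\alpha$ and $\bigwedge S$ exists in $P$ then $h(\bigwedge S)=\bigcap h[S]$ (with $\bigcap\emptyset=X$), and whenever $T\subseteq P$ with $|T|<\beta$ and $\bigvee T$ exists in $P$ then $h(\bigvee T)=\bigcup h[T]$. *)

From Stdlib Require Import List Arith.
Import ListNotations.

(* ---------- First-order formulas in the signature of posets {<=}, with equality.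
   Variables are de Bruijn indices. *)
Inductive formula : Type :=
| FEq  : nat -> nat -> formula
| FLe  : nat -> nat -> formula
| FBot : formula
| FImp : formula -> formula -> formula
| FAnd : formula -> formula -> formula
| FOr  : formula -> formula -> formula
| FAll : formula -> formula
| FEx  : formula -> formula.

Fixpoint closed_at (k : nat) (f : formula) : Prop :=
  match f with
  | FEq i j | FLe i j => i < k /\ j < k
  | FBot => True
  | FImp p q | FAnd p q | FOr p q => closed_at k p /\ closed_at k q
  | FAll p | FEx p => closed_at (S k) p
  end.

Definition sentence (f : formula) : Prop := closed_at 0 f.

Fixpoint sat {T : Type} (le : T -> T -> Prop) (env : list T) (f : formula) : Prop :=
  match f with
  | FEq i j => match nth_error env i, nth_error env j with
               | Some a, Some b => a = b | _, _ => False end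
  | FLe i j => match nth_error env i, nth_error env j with
               | Some a, Some b => le a b | _, _ => False end
  | FBot => False
  | FImp p q => sat le env p -> sat le env q
  | FAnd p q => sat le env p /\ sat le env q
  | FOr p q => sat le env p \/ sat le env q
  | FAll p => forall x : T, sat le (x :: env) p
  | FEx p => exists x : T, sat le (x :: env) p
  end.

Definition models {T : Type} (le : T -> T -> Prop) (Theta : formula -> Prop) : Prop :=
  forall f, Theta f -> sat le [] f.

Definition cpair (a b : nat) : nat := (a + b) * (a + b + 1) / 2 + b.

Fixpoint code (f : formula) : nat :=
  match f with
  | FEq i j => cpair 0 (cpair i j)
  | FLe i j => cpair 1 (cpair i j)
  | FBot => cpair 2 0
  | FImp p q => cpair 3 (cpair (code p) (code q))
  | FAnd p q => cpair 4 (cpair (code p) (code q))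
  | FOr p q => cpair 5 (cpair (code p) (code q))
  | FAll p => cpair 6 (code p)
  | FEx p => cpair 7 (code p)
  end.

Inductive recf : Type :=
| RZero : recf
| RSucc : recf
| RProj : nat -> recf
| RComp : recf -> list recf -> recf
| RPrim : recf -> recf -> recf
| RMu   : recf -> recf.

Inductive eval : recf -> list nat -> nat -> Prop :=
| ev_zero : forall v, eval RZero v 0
| ev_succ : forall v, eval RSucc v (S (hd 0 v))
| ev_proj : forall i v, i < length v -> eval (RProj i) v (nth i v 0)
| ev_comp : forall f gs v ys z,
    Forall2 (fun g y => eval g v y) gs ys -> eval f ys z -> eval (RComp f gs) v z
| ev_prim0 : forall f g v y, eval f v y -> eval (RPrim f g) (0 :: v) y
| ev_primS : forall f g n v r y,
    eval (RPrim f g) (n :: v) r -> eval g (n :: r :: v) y ->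
    eval (RPrim f g) (S n :: v) y
| ev_mu : forall f v n,
    eval f (n :: v) 0 ->
    (forall m, m < n -> exists k, eval f (m :: v) (S k)) ->
    eval (RMu f) v n.

Definition recursive_nat_set (A : nat -> Prop) : Prop :=
  exists e : recf, forall n, (A n -> eval e [n] 1) /\ (~ A n -> eval e [n] 0).

Definition recursive_formula_set (Theta : formula -> Prop) : Prop :=
  recursive_nat_set (fun n => exists f, Theta f /\ code f = n).

Inductive cardp : Type := Fin (n : nat) | Omega.

Definition ge2 (a : cardp) : Prop :=
  match a with Fin n => 2 <= n | Omega => True end.

Definition card_lt {T : Type} (S : T -> Prop) (a : cardp) : Prop :=
  exists l : list T, NoDup l /\ (forall x, S x <-> In x l) /\
    match a with Fin n => length l < n | Omega => True end.

Definition is_poset {T : Type} (le : T -> T -> Prop) : Prop :=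
  (forall x, le x x) /\
  (forall x y, le x y -> le y x -> x = y) /\
  (forall x y z, le x y -> le y z -> le x z).

Definition countable (T : Type) : Prop :=
  exists f : T -> nat, forall x y, f x = f y -> x = y.

Definition is_glb {T : Type} (le : T -> T -> Prop) (S : T -> Prop) (m : T) : Prop :=
  (forall s, S s -> le m s) /\ (forall y, (forall s, S s -> le y s) -> le y m).

Definition is_lub {T : Type} (le : T -> T -> Prop) (S : T -> Prop) (m : T) : Prop :=
  (forall s, S s -> le s m) /\ (forall y, (forall s, S s -> le s y) -> le m y).

(* Subsets of X are predicates X -> Prop; equality of sets is extensional. *)
Definition representable (a b : cardp) {T : Type} (le : T -> T -> Prop) : Prop :=
  exists (X : Type) (h : T -> X -> Prop),
    (forall p q, le p q <-> (forall x, h p x -> h q x)) /\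
    (forall (S : T -> Prop) m, card_lt S a -> is_glb le S m ->
       forall x, h m x <-> (forall s, S s -> h s x)) /\
    (forall (S : T -> Prop) m, card_lt S b -> is_lub le S m ->
       forall x, h m x <-> (exists s, S s /\ h s x)).

(* The points of a representation can be taken to be (α,β)-filters: up-sets that are closed
   under the existing meets of fewer than α elements and prime for the existing joins of fewer
   than β elements.  So a poset is (α,β)-representable iff any p ≰ q are separated by such a
   filter.

   The n-th sentence of Θ says: for all x_0, ..., x_(n+1) with x_0 ≰ x_1 there is a set of
   indices, containing 0 but not 1, that looks like the trace of a separating filter on the
   tuple: it is upward closed along the order, contains x_k whenever x_k is the meet of fewer
   than α marked elements, and misses x_k whenever x_k is the join of fewer than β unmarked
   ones.  Filters restrict to such traces.  Conversely, enumerate a countable poset starting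
   with p and q; the traces on longer and longer initial segments form a finitely branching
   tree, and an infinite branch given by König's lemma is a filter separating p from q.

   Θ is recursive: the n-th sentence is computed from n by a primitive recursive program and
   its code is at least n, so deciding membership is a bounded search. *)

From Stdlib Require Import List Arith Lia Bool Classical ClassicalEpsilon.
Import ListNotations.

Definition holds (P : Prop) : bool := if excluded_middle_informative P then true else false.

Lemma holds_spec P : holds P = true <-> P.
Proof. unfold holds. destruct (excluded_middle_informative P); split; auto; discriminate. Qed.

Lemma holds_false P : holds P = false <-> ~ P.
Proof.
  unfold holds. destruct (excluded_middle_informative P); split; auto; try discriminate. tauto.
Qed.

(** * Representations and filters *)

Definition glb_closed (c : cardp) {T} (R : T -> T -> Prop) (G : T -> Prop) : Prop :=
  forall S m, card_lt S c -> is_glb R S m -> (forall s, S s -> G s) -> G m.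

(* The last clause is join-primeness of [F], stated contrapositively. *)
Definition ab_filter (al be : cardp) {T} (le : T -> T -> Prop) (F : T -> Prop) : Prop :=
  (forall x y, F x -> le x y -> F y) /\
  glb_closed al le F /\ glb_closed be (fun x y => le y x) (fun x => ~ F x).

Definition separated_by_filters (al be : cardp) {T} (le : T -> T -> Prop) : Prop :=
  forall p q, ~ le p q -> exists F, ab_filter al be le F /\ F p /\ ~ F q.

Lemma representable_iff_separated al be {T} (le : T -> T -> Prop) :
  representable al be le <-> separated_by_filters al be le.
Proof.
  split.
  - intros (X & h & Hord & Hmeet & Hjoin) p q Hpq.
    assert (Hx : exists x, h p x /\ ~ h q x).
    { apply NNPP. intros Hno. apply Hpq, Hord. intros x Hp. apply NNPP. eauto. }
    destruct Hx as [x [Hp Hq]]. exists (fun y => h y x). split; [|auto].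
    split; [|split].
    + intros y z Hy Hyz. exact (proj1 (Hord y z) Hyz x Hy).
    + intros S m HS Hglb HSx. apply (Hmeet S m HS Hglb x). exact HSx.
    + intros S m HS Hlub HSx Hm. apply (Hjoin S m HS Hlub x) in Hm as [s [Hs Hsx]].
      exact (HSx s Hs Hsx).
  - intros Hsep. exists {F : T -> Prop | ab_filter al be le F}, (fun p F => proj1_sig F p).
    split; [|split].
    + intros p q. split.
      * intros Hpq [F HF] Hp. exact (proj1 HF p q Hp Hpq).
      * intros H. apply NNPP. intros Hpq. destruct (Hsep p q Hpq) as [F [HF [Hp Hq]]].
        exact (Hq (H (exist _ F HF) Hp)).
    + intros S m HS Hglb [F HF]. simpl. destruct HF as (Hup & Hmeet & _). split.
      * intros Hm s Hs. apply (Hup m); auto. apply Hglb, Hs.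
      * apply Hmeet; auto.
    + intros S m HS Hlub [F HF]. simpl. destruct HF as (Hup & _ & Hjoin). split.
      * intros Hm. apply NNPP. intros Hno. apply (Hjoin S m HS Hlub); eauto.
      * intros [s [Hs Hsx]]. apply (Hup s); auto. apply Hlub, Hs.
Qed.

(** * Finite traces of filters *)

Fixpoint popcount (N L : nat) : nat :=
  match N with 0 => 0 | S N => popcount N L + Nat.b2n (Nat.testbit L N) end.

Definition lt_card (c : cardp) (n : nat) : bool :=
  match c with Fin m => n <? m | Omega => true end.

Definition testbit_pol (fl : bool) (a l : nat) : bool := xorb fl (Nat.testbit a l).

Fixpoint all_bits (N L : nat) (p : nat -> bool) : bool :=
  match N with 0 => true | S N => all_bits N L p && implb (Nat.testbit L N) (p N) end.

Lemma all_bits_spec N L p :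
  all_bits N L p = true <-> (forall l, l < N -> Nat.testbit L l = true -> p l = true).
Proof.
  induction N; simpl; [split; auto; lia|].
  rewrite andb_true_iff, IHN. split.
  - intros [H1 H2] l Hl Hb. destruct (Nat.eq_dec l N) as [->|]; [rewrite Hb in H2; exact H2|].
    apply H1; auto; lia.
  - intros H. split; [intros; apply H; auto; lia|].
    destruct (Nat.testbit L N) eqn:E; simpl; auto.
Qed.

Definition masked {T} (e : nat -> T) (N L : nat) (y : T) : Prop :=
  exists l, l < N /\ Nat.testbit L l = true /\ e l = y.

Lemma exists_mask N (p : nat -> bool) :
  exists a, a < 2 ^ N /\ forall l, l < N -> Nat.testbit a l = p l.
Proof.
  revert p. induction N as [|N IH]; intros p; [exists 0; split; [simpl | intros]; lia|].
  destruct (IH (fun l => p (S l))) as [a [Ha Hbits]].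
  exists (2 * a + Nat.b2n (p 0)). split; [destruct (p 0); simpl; lia|].
  intros [|l] Hl; [apply Nat.testbit_0_r|]. rewrite Nat.testbit_succ_r. apply Hbits. lia.
Qed.

Lemma popcount_filter N L : popcount N L = length (filter (Nat.testbit L) (seq 0 N)).
Proof.
  induction N; auto. rewrite seq_S, filter_app, length_app, <- IHN. simpl.
  destruct (Nat.testbit L N); simpl; lia.
Qed.

Lemma testbit_above L N l : L < 2 ^ N -> N <= l -> Nat.testbit L l = false.
Proof.
  intros HL Hl. destruct (Nat.eq_dec L 0) as [->|HL0]; [apply Nat.bits_0|].
  apply Nat.bits_above_log2. apply Nat.log2_lt_pow2 in HL; lia.
Qed.

Lemma popcount_above N N' L :
  (forall l, N <= l -> Nat.testbit L l = false) -> N <= N' -> popcount N' L = popcount N L.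
Proof. intros Hhigh HN. induction HN; simpl; auto. rewrite Hhigh by lia. simpl. lia. Qed.

Lemma lt_card_le c m n : m <= n -> lt_card c n = true -> lt_card c m = true.
Proof. destruct c; simpl; auto. rewrite !Nat.ltb_lt. lia. Qed.

Lemma lt_card_length {A} c (ls : list A) :
  (match c with Fin n => length ls < n | Omega => True end) -> lt_card c (length ls) = true.
Proof. destruct c; simpl; auto. apply Nat.ltb_lt. Qed.

Lemma card_lt_of_list {T} (S : T -> Prop) (c : cardp) (ls : list T) :
  (forall x, S x <-> In x ls) -> lt_card c (length ls) = true -> card_lt S c.
Proof.
  intros HS Hc. set (dec := fun x y : T => excluded_middle_informative (x = y)).
  exists (nodup dec ls). split; [apply NoDup_nodup|]. split.
  - intros x. rewrite HS, nodup_In. reflexivity.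
  - assert (length (nodup dec ls) <= length ls)
      by (apply NoDup_incl_length; [apply NoDup_nodup | intros x; apply nodup_In]).
    destruct c; simpl in *; auto. apply Nat.ltb_lt in Hc. lia.
Qed.

Lemma card_masked {T} c (e : nat -> T) N L :
  lt_card c (popcount N L) = true -> card_lt (masked e N L) c.
Proof.
  intros Hc. apply (card_lt_of_list _ _ (map e (filter (Nat.testbit L) (seq 0 N)))).
  - intros x. rewrite in_map_iff. split.
    + intros [l [Hl [Hb <-]]]. exists l. rewrite filter_In, in_seq. auto with arith.
    + intros [l [<- Hin]]. rewrite filter_In, in_seq in Hin. exists l. split; [lia | tauto].
  - rewrite length_map, <- popcount_filter. exact Hc.
Qed.

Lemma is_glb_iff {T} (R : T -> T -> Prop) (S S' : T -> Prop) m :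
  (forall y, S y <-> S' y) -> is_glb R S m -> is_glb R S' m.
Proof.
  intros H [Hlow Hgreat]. split; [intros s Hs; apply Hlow, H, Hs|].
  intros y Hy. apply Hgreat. intros s Hs. apply Hy, H, Hs.
Qed.

Section Traces.

Context {T : Type} (le : T -> T -> Prop).

Definition avoids_glbs (c : cardp) (R : T -> T -> Prop) (e : nat -> T) (N : nat)
    (g : nat -> bool) : Prop :=
  forall k L, k < N -> L < 2 ^ N -> lt_card c (popcount N L) = true ->
    (forall l, l < N -> Nat.testbit L l = true -> g l = true) -> g k = false ->
    ~ is_glb R (masked e N L) (e k).

(* [g] is the trace on [e 0, ..., e (N-1)] of an (α,β)-filter containing [e 0] but not
   [e 1], as far as the order can tell. *)
Definition separating_trace (al be : cardp) (e : nat -> T) (N : nat) (g : nat -> bool) : Prop :=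
  g 0 = true /\ g 1 = false /\
  (forall k l, k < N -> l < N -> g k = true -> g l = false -> ~ le (e k) (e l)) /\
  avoids_glbs al le e N g /\
  avoids_glbs be (fun x y => le y x) e N (fun l => negb (g l)).

Lemma avoids_glbs_ext c (R : T -> T -> Prop) (e e' : nat -> T) N g g' :
  (forall l, l < N -> e l = e' l) -> (forall l, l < N -> g l = g' l) ->
  avoids_glbs c R e N g -> avoids_glbs c R e' N g'.
Proof.
  intros He Hg Hav k L Hk HL Hc Hsub Hout Hglb. apply (Hav k L Hk HL Hc).
  - intros l Hl Hb. rewrite Hg; auto.
  - rewrite Hg; auto.
  - rewrite He by exact Hk. revert Hglb. apply is_glb_iff.
    intros y. split; intros [l [Hl [Hb <-]]]; exists l; rewrite ?He; auto.
Qed.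

Lemma avoids_glbs_le c (R : T -> T -> Prop) (e : nat -> T) M M' g :
  M <= M' -> avoids_glbs c R e M' g -> avoids_glbs c R e M g.
Proof.
  intros HM Hav k L Hk HL Hc Hsub Hout Hglb.
  assert (Hhigh : forall l, M <= l -> Nat.testbit L l = false)
    by (intros; apply (testbit_above L M); auto).
  apply (Hav k L); auto.
  - lia.
  - apply (Nat.lt_le_trans _ _ _ HL), Nat.pow_le_mono_r; lia.
  - rewrite (popcount_above M) by auto. exact Hc.
  - intros l Hl Hb. apply Hsub; auto. destruct (Nat.lt_ge_cases l M); auto.
    rewrite Hhigh in Hb by auto. discriminate.
  - revert Hglb. apply is_glb_iff. intros y. split; intros [l [Hl [Hb <-]]]; exists l.
    + repeat split; auto. lia.
    + repeat split; auto. destruct (Nat.lt_ge_cases l M); auto.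
      rewrite Hhigh in Hb by auto. discriminate.
Qed.

Lemma separating_trace_ext al be (e e' : nat -> T) N g g' : 2 <= N ->
  (forall l, l < N -> e l = e' l) -> (forall l, l < N -> g l = g' l) ->
  separating_trace al be e N g -> separating_trace al be e' N g'.
Proof.
  intros HN He Hg (H0 & H1 & Hmono & Hmeet & Hjoin).
  split; [rewrite <- Hg by lia; auto|]. split; [rewrite <- Hg by lia; auto|]. split; [|split].
  - intros k l Hk Hl Hgk Hgl. rewrite <- !He by auto. apply Hmono; auto; rewrite Hg; auto.
  - revert Hmeet. apply avoids_glbs_ext; auto.
  - revert Hjoin. apply avoids_glbs_ext; auto. intros l Hl. rewrite Hg; auto.
Qed.

Lemma separating_trace_le al be (e : nat -> T) M M' g :
  M <= M' -> separating_trace al be e M' g -> separating_trace al be e M g.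
Proof.
  intros HM (H0 & H1 & Hmono & Hmeet & Hjoin). repeat split; auto.
  - intros k l Hk Hl. apply Hmono; lia.
  - revert Hmeet. apply avoids_glbs_le; auto.
  - revert Hjoin. apply avoids_glbs_le; auto.
Qed.

End Traces.

Lemma avoids_of_glb_closed c {T} (R : T -> T -> Prop) G e N g :
  glb_closed c R G -> (forall l, g l = true <-> G (e l)) -> avoids_glbs c R e N g.
Proof.
  intros Hcl Hg k L Hk HL Hc Hsub Hout Hglb.
  assert (G (e k)) as Hk' by
    (apply (Hcl _ _ (card_masked c e N L Hc) Hglb); intros s [l [Hl [Hb <-]]]; apply Hg; auto).
  apply Hg in Hk'. congruence.
Qed.

Lemma trace_of_filter al be {T} (le : T -> T -> Prop) F e N :
  ab_filter al be le F -> F (e 0) -> ~ F (e 1) ->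
  separating_trace le al be e N (fun l => holds (F (e l))).
Proof.
  intros (Hup & Hmeet & Hjoin) H0 H1.
  split; [apply holds_spec, H0|]. split; [apply holds_false, H1|]. split; [|split].
  - intros k l _ _ Hk Hl Hkl. rewrite holds_spec in Hk. rewrite holds_false in Hl.
    exact (Hl (Hup _ _ Hk Hkl)).
  - apply (avoids_of_glb_closed _ _ _ _ _ _ Hmeet). intros l. apply holds_spec.
  - apply (avoids_of_glb_closed _ _ _ _ _ _ Hjoin). intros l.
    rewrite negb_true_iff. apply holds_false.
Qed.

Lemma glb_closed_of_avoids c {T} (R : T -> T -> Prop) (e : nat -> T) pos g (G : T -> Prop) :
  (forall x, e (pos x) = x) -> (forall x, G x <-> g (pos x) = true) ->
  (forall N, avoids_glbs c R e N g) -> glb_closed c R G.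
Proof.
  intros Hpos HG Hav A m [ls [_ [HA Hlen]]] Hglb HAG.
  apply HG. destruct (g (pos m)) eqn:Em; auto. exfalso.
  (* The violation is already visible among the first [N] elements of the enumeration. *)
  set (N := S (pos m + list_max (map pos ls))).
  assert (HN : forall s, In s ls -> pos s < N).
  { intros s Hs. pose proof (proj1 (list_max_le (map pos ls) _) (Nat.le_refl _)) as Hmax.
    rewrite Forall_forall in Hmax. specialize (Hmax _ (in_map pos ls s Hs)). unfold N. lia. }
  destruct (exists_mask N (fun l => holds (exists s, In s ls /\ pos s = l))) as [L [HL Hbits]].
  assert (Hmasked : forall y, masked e N L y <-> A y).
  { intros y. rewrite HA. split.
    - intros [l [Hl [Hb <-]]]. rewrite Hbits, holds_spec in Hb by exact Hl.
      destruct Hb as [s [Hs <-]]. rewrite Hpos. exact Hs.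
    - intros Hy. exists (pos y). split; [auto|]. split; [|apply Hpos].
      rewrite Hbits, holds_spec by auto. eauto. }
  assert (Hpop : popcount N L <= length ls).
  { rewrite popcount_filter, <- (length_map pos ls). apply NoDup_incl_length.
    - apply NoDup_filter, seq_NoDup.
    - intros l. rewrite filter_In, in_seq, in_map_iff. intros [Hl Hb].
      rewrite Hbits, holds_spec in Hb by lia. destruct Hb as [s [Hs <-]]. eauto. }
  apply (Hav N (pos m) L); auto.
  - unfold N. lia.
  - apply (lt_card_le c _ _ Hpop), lt_card_length, Hlen.
  - intros l Hl Hb. rewrite Hbits, holds_spec in Hb by exact Hl.
    destruct Hb as [s [Hs <-]]. apply HG, HAG, HA, Hs.
  - rewrite Hpos. revert Hglb. apply is_glb_iff. intros y. symmetry. apply Hmasked.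
Qed.

Section FilterOfTraces.

Context {T : Type} (le : T -> T -> Prop) (al be : cardp) (e : nat -> T) (g : nat -> bool).
Hypothesis traces : forall N, separating_trace le al be e N g.

Lemma trace_upward k l : g k = true -> le (e k) (e l) -> g l = true.
Proof.
  intros Hk Hkl. destruct (g l) eqn:Hl; auto. exfalso.
  destruct (traces (S (k + l))) as (_ & _ & Hmono & _). apply (Hmono k l); auto; lia.
Qed.

Lemma filter_of_traces pos :
  (forall x, e (pos x) = x) -> ab_filter al be le (fun x => g (pos x) = true).
Proof.
  intros Hpos. split; [|split].
  - intros x y Hx Hxy. apply (trace_upward (pos x)); auto. rewrite !Hpos. exact Hxy.
  - apply (glb_closed_of_avoids _ _ e pos g); auto; [reflexivity|].
    intros N. apply (traces N).
  - apply (glb_closed_of_avoids _ _ e pos (fun l => negb (g l))); auto.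
    + intros x. rewrite negb_true_iff, not_true_iff_false. reflexivity.
    + intros N. apply (traces N).
Qed.

End FilterOfTraces.

(** * König's lemma *)

Section Koenig.

Variable Q : nat -> (nat -> bool) -> Prop.
Hypothesis Q_local : forall M g g', (forall l, l < M -> g l = g' l) -> Q M g -> Q M g'.
Hypothesis Q_down : forall M M' g, M <= M' -> Q M' g -> Q M g.
Hypothesis Q_inhabited : forall M, exists g, Q M g.

Definition extendable (n : nat) (s : nat -> bool) : Prop :=
  forall M, exists g, Q M g /\ forall i, i < n -> g i = s i.

Definition set_bit (s : nat -> bool) (n : nat) (b : bool) : nat -> bool :=
  fun i => if i =? n then b else s i.

Fixpoint branch (n : nat) : nat -> bool :=
  match n with
  | 0 => fun _ => false
  | S n => set_bit (branch n) n (holds (extendable (S n) (set_bit (branch n) n true)))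
  end.

Lemma extendable_step n s : extendable n s ->
  extendable (S n) (set_bit s n true) \/ extendable (S n) (set_bit s n false).
Proof.
  intros Hs. apply NNPP. intros Hno. apply not_or_and in Hno as [Htrue Hfalse].
  apply not_all_ex_not in Htrue as [M1 H1]. apply not_all_ex_not in Hfalse as [M0 H0].
  destruct (Hs (Nat.max M0 M1)) as [g [HQ Hagree]].
  assert (Hg : forall i, i < S n -> g i = set_bit s n (g n) i).
  { intros i Hi. unfold set_bit. destruct (Nat.eqb_spec i n) as [->|]; auto. apply Hagree. lia. }
  destruct (g n); [apply H1 | apply H0]; exists g; split; auto;
    apply (Q_down _ (Nat.max M0 M1)); auto; lia.
Qed.

Lemma branch_extendable n : extendable n (branch n).
Proof.
  induction n as [|n IH].
  - intros M. destruct (Q_inhabited M) as [g Hg]. exists g. split; auto. lia.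
  - simpl. destruct (holds _) eqn:E; [apply holds_spec, E|].
    apply holds_false in E. destruct (extendable_step n _ IH); tauto.
Qed.

Lemma branch_stable m i : i < m -> branch m i = branch (S i) i.
Proof.
  induction m as [|m IH]; intros Hi; [lia|].
  destruct (Nat.eq_dec i m) as [->|]; [reflexivity|].
  simpl branch at 1. unfold set_bit at 1. destruct (Nat.eqb_spec i m); [lia|]. apply IH. lia.
Qed.

Lemma koenig : exists g, forall M, Q M g.
Proof.
  exists (fun i => branch (S i) i). intros M.
  destruct (branch_extendable M M) as [g [HQ Hagree]].
  apply (Q_local M g); auto. intros l Hl. rewrite Hagree by exact Hl. apply branch_stable, Hl.
Qed.

End Koenig.

Lemma enumeration_of_countable {T} : countable T ->
  forall p q : T,
    exists (e : nat -> T) (pos : T -> nat), e 0 = p /\ e 1 = q /\ forall x, e (pos x) = x.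
Proof.
  intros [f Hf] p q.
  exists (fun k => match k with
                   | 0 => p | 1 => q | S (S k) => epsilon (inhabits p) (fun x => f x = k)
                   end),
    (fun x => S (S (f x))).
  split; [reflexivity|]. split; [reflexivity|]. intros x. apply Hf.
  apply (epsilon_spec (inhabits p) (fun y => f y = f x)). eauto.
Qed.

(** * The sentences of Θ *)

Definition FTop : formula := FImp FBot FBot.
Definition FNeg (p : formula) : formula := FImp p FBot.

Fixpoint big (op : formula -> formula -> formula) (unit : formula) (m : nat)
    (F : nat -> formula) : formula :=
  match m with 0 => unit | S m => op (F m) (big op unit m F) end.

Definition BigAnd : nat -> (nat -> formula) -> formula := big FAnd FTop.
Definition BigOr : nat -> (nat -> formula) -> formula := big FOr FBot.

Definition FLe_pol (fl : bool) (i j : nat) : formula := if fl then FLe j i else FLe i j.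

(* [L] codes the index set [{l < N | testbit L l}].  Variables [0..N-1] denote the tuple; under
   [FAll] the new variable is [0] and the tuple is shifted by one.  Polarity [fl = true] reverses
   the order, so [glb_formula true] expresses least upper bounds, and [testbit_pol true a] is
   the complement of [a]. *)
Definition glb_formula (fl : bool) (N k L : nat) : formula :=
  FAnd (BigAnd N (fun l => if Nat.testbit L l then FLe_pol fl k l else FTop))
       (FAll (FImp (BigAnd N (fun l => if Nat.testbit L l then FLe_pol fl 0 (S l) else FTop))
                   (FLe_pol fl 0 (S k)))).

Definition avoid_formula (fl : bool) (c : cardp) (N a : nat) : formula :=
  BigAnd N (fun k => BigAnd (2 ^ N) (fun L =>
    if lt_card c (popcount N L) && all_bits N L (testbit_pol fl a) && negb (testbit_pol fl a k)
    then FNeg (glb_formula fl N k L) else FTop)).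

Definition mono_formula (N a : nat) : formula :=
  BigAnd N (fun k => BigAnd N (fun l =>
    if Nat.testbit a k && negb (Nat.testbit a l) then FNeg (FLe k l) else FTop)).

Definition trace_formula (al be : cardp) (N a : nat) : formula :=
  if Nat.testbit a 0 && negb (Nat.testbit a 1)
  then FAnd (mono_formula N a) (FAnd (avoid_formula false al N a) (avoid_formula true be N a))
  else FBot.

Definition separation_formula (al be : cardp) (N : nat) : formula :=
  FImp (FNeg (FLe 0 1)) (BigOr (2 ^ N) (trace_formula al be N)).

Definition FAlls (m : nat) (p : formula) : formula := Nat.iter m FAll p.

Definition theta_sentence (al be : cardp) (n : nat) : formula :=
  FAlls (S (S n)) (separation_formula al be (S (S n))).

Lemma closed_big op unit k m F :
  (forall X Y, closed_at k X -> closed_at k Y -> closed_at k (op X Y)) -> closed_at k unit ->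
  (forall i, i < m -> closed_at k (F i)) -> closed_at k (big op unit m F).
Proof. intros Hop Hu HF. induction m; simpl; auto. apply Hop; auto. Qed.

Lemma closed_BigAnd k m F :
  (forall i, i < m -> closed_at k (F i)) -> closed_at k (BigAnd m F).
Proof. apply closed_big; simpl; auto. Qed.

Lemma closed_BigOr k m F :
  (forall i, i < m -> closed_at k (F i)) -> closed_at k (BigOr m F).
Proof. apply closed_big; simpl; auto. Qed.

Lemma closed_when k (b : bool) X : closed_at k X -> closed_at k (if b then X else FTop).
Proof. destruct b; simpl; auto. Qed.

Lemma closed_FLe_pol k fl i j : i < k -> j < k -> closed_at k (FLe_pol fl i j).
Proof. destruct fl; simpl; auto. Qed.

Lemma closed_FAlls m : forall k p, closed_at (m + k) p -> closed_at k (FAlls m p).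
Proof.
  induction m as [|m IH]; intros k p H; [exact H|].
  unfold FAlls. rewrite Nat.iter_succ_r. apply IH. simpl.
  replace (m + S k) with (S (m + k)) by lia. exact H.
Qed.

Lemma closed_glb_formula fl N k L : k < N -> closed_at N (glb_formula fl N k L).
Proof.
  intros Hk. unfold glb_formula. simpl. split; [|split].
  - apply closed_BigAnd. intros l Hl. apply closed_when, closed_FLe_pol; lia.
  - apply closed_BigAnd. intros l Hl. apply closed_when, closed_FLe_pol; lia.
  - apply closed_FLe_pol; lia.
Qed.

Lemma closed_trace_formula al be N a : closed_at N (trace_formula al be N a).
Proof.
  assert (Havoid : forall fl c, closed_at N (avoid_formula fl c N a)).
  { intros fl c. apply closed_BigAnd. intros k Hk. apply closed_BigAnd. intros L _.
    apply closed_when. split; [apply closed_glb_formula; auto | exact I]. }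
  unfold trace_formula. destruct (_ && _); simpl; auto. split; [|auto].
  apply closed_BigAnd. intros k Hk. apply closed_BigAnd. intros l Hl.
  apply closed_when. simpl. auto.
Qed.

Lemma theta_sentence_closed al be n : sentence (theta_sentence al be n).
Proof.
  apply closed_FAlls. rewrite Nat.add_0_r. simpl. split; [lia|].
  apply closed_BigOr. intros a _. apply closed_trace_formula.
Qed.

Section Satisfaction.

Context {T : Type} (le : T -> T -> Prop).

Lemma sat_BigAnd env m F :
  sat le env (BigAnd m F) <-> (forall i, i < m -> sat le env (F i)).
Proof.
  induction m as [|m IH]; simpl; [split; [lia | auto]|].
  rewrite IH. split; [|auto].
  intros [Hm H] i Hi. destruct (Nat.eq_dec i m) as [->|]; auto. apply H. lia.
Qed.

Lemma sat_BigOr env m F :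
  sat le env (BigOr m F) <-> (exists i, i < m /\ sat le env (F i)).
Proof.
  induction m as [|m IH]; simpl; [split; [tauto | intros [i [Hi _]]; lia]|].
  rewrite IH. split.
  - intros [H | [i [Hi H]]]; eauto.
  - intros [i [Hi H]]. destruct (Nat.eq_dec i m) as [->|]; auto. right. exists i. split; auto. lia.
Qed.

Lemma sat_when env (b : bool) X :
  sat le env (if b then X else FTop) <-> (b = true -> sat le env X).
Proof. destruct b; simpl; intuition discriminate. Qed.

Lemma sat_FAlls m : forall p env,
  sat le env (FAlls m p) <-> (forall l, length l = m -> sat le (l ++ env) p).
Proof.
  induction m as [|m IH]; intros p env.
  - split; [intros H [|x l] Hl; [exact H | discriminate] | intros H; apply (H [])]; reflexivity.
  - unfold FAlls. rewrite Nat.iter_succ_r. fold (FAlls m (FAll p)). rewrite IH. split.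
    + intros H [|x l] Hl; [discriminate|]. injection Hl as Hl. apply (H l Hl x).
    + intros H l Hl x. apply (H (x :: l)). simpl. auto.
Qed.

Definition orient (fl : bool) : T -> T -> Prop := if fl then fun x y => le y x else le.

Lemma sat_FLe_pol env d fl i j : i < length env -> j < length env ->
  (sat le env (FLe_pol fl i j) <-> orient fl (nth i env d) (nth j env d)).
Proof.
  intros Hi Hj. destruct fl; simpl; rewrite !(nth_error_nth' env d) by auto; reflexivity.
Qed.

Lemma sat_FLe env d i j : i < length env -> j < length env ->
  (sat le env (FLe i j) <-> le (nth i env d) (nth j env d)).
Proof. apply (sat_FLe_pol env d false). Qed.

Lemma sat_glb_formula env d fl N k L : length env = N -> k < N ->
  (sat le env (glb_formula fl N k L) <->
   is_glb (orient fl) (masked (fun l => nth l env d) N L) (nth k env d)).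
Proof.
  intros HN Hk. unfold glb_formula, is_glb, masked. simpl sat at 1. rewrite sat_BigAnd.
  setoid_rewrite sat_when. setoid_rewrite sat_BigAnd. setoid_rewrite sat_when.
  split; intros [Hlow Hgreat]; split.
  - intros s [l [Hl [Hb <-]]]. rewrite <- sat_FLe_pol by lia. auto.
  - intros y Hy. specialize (Hgreat y).
    rewrite (sat_FLe_pol (y :: env) d) in Hgreat by (simpl; lia). apply Hgreat.
    intros l Hl Hb. rewrite (sat_FLe_pol (y :: env) d) by (simpl; lia). apply Hy. eauto.
  - intros l Hl Hb. rewrite sat_FLe_pol by lia. apply Hlow. eauto.
  - intros y Hy. rewrite (sat_FLe_pol (y :: env) d) by (simpl; lia). apply Hgreat.
    intros s [l [Hl [Hb <-]]]. specialize (Hy l Hl Hb).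
    rewrite (sat_FLe_pol (y :: env) d) in Hy by (simpl; lia). exact Hy.
Qed.

Lemma sat_avoid_formula env d fl c N a : length env = N ->
  (sat le env (avoid_formula fl c N a) <->
   avoids_glbs c (orient fl) (fun l => nth l env d) N (testbit_pol fl a)).
Proof.
  intros HN. unfold avoid_formula, avoids_glbs. rewrite sat_BigAnd.
  setoid_rewrite sat_BigAnd. setoid_rewrite sat_when. split.
  - intros H k L Hk HL Hc Hsub Hout Hglb. apply (H k Hk L HL).
    + rewrite Hc, Hout, (proj2 (all_bits_spec _ _ _) Hsub). reflexivity.
    + rewrite sat_glb_formula by auto. exact Hglb.
  - intros H k Hk L HL Hb. apply andb_true_iff in Hb as [Hb Hout].
    apply andb_true_iff in Hb as [Hc Hsub]. intros Hglb.
    rewrite sat_glb_formula in Hglb by auto. revert Hglb.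
    apply H; auto; [apply all_bits_spec | apply negb_true_iff]; auto.
Qed.

Lemma sat_mono_formula env d N a : length env = N ->
  (sat le env (mono_formula N a) <->
   forall k l, k < N -> l < N -> Nat.testbit a k = true -> Nat.testbit a l = false ->
     ~ le (nth k env d) (nth l env d)).
Proof.
  intros HN. unfold mono_formula. rewrite sat_BigAnd.
  setoid_rewrite sat_BigAnd. setoid_rewrite sat_when. split.
  - intros H k l Hk Hl Ha Hb. rewrite <- (sat_FLe env d) by lia.
    apply (H k Hk l Hl). rewrite Ha, Hb. reflexivity.
  - intros H k Hk l Hl Hab. apply andb_true_iff in Hab as [Ha Hb]. apply negb_true_iff in Hb.
    intros Hkl. rewrite (sat_FLe env d) in Hkl by lia. revert Hkl. apply H; auto.
Qed.

Lemma sat_trace_formula al be env d N a : length env = N ->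
  (sat le env (trace_formula al be N a) <->
   separating_trace le al be (fun l => nth l env d) N (Nat.testbit a)).
Proof.
  intros HN. unfold trace_formula, separating_trace.
  destruct (Nat.testbit a 0), (Nat.testbit a 1); simpl; try (intuition discriminate).
  rewrite (sat_mono_formula env d), !(sat_avoid_formula env d) by auto.
  split; [intros H; split; [|split] | intros (_ & _ & H)]; auto.
Qed.

Lemma sat_theta_sentence al be n :
  sat le [] (theta_sentence al be n) <->
  (forall e : nat -> T, ~ le (e 0) (e 1) ->
     exists a, a < 2 ^ S (S n) /\ separating_trace le al be e (S (S n)) (Nat.testbit a)).
Proof.
  set (N := S (S n)). assert (HN : 2 <= N) by (unfold N; lia).
  assert (Hsep : forall env d, length env = N ->
    sat le env (separation_formula al be N) <->
    (~ le (nth 0 env d) (nth 1 env d) ->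
     exists a, a < 2 ^ N /\ separating_trace le al be (fun l => nth l env d) N (Nat.testbit a))).
  { intros env d Hlen. unfold separation_formula.
    transitivity (~ sat le env (FLe 0 1) -> sat le env (BigOr (2 ^ N) (trace_formula al be N)));
      [reflexivity|].
    rewrite (sat_FLe env d), sat_BigOr by lia.
    setoid_rewrite (sat_trace_formula al be env d); auto.
    reflexivity. }
  unfold theta_sentence. rewrite sat_FAlls. setoid_rewrite app_nil_r. split.
  - intros H e He. set (env := map e (seq 0 N)).
    assert (Henv : forall l, l < N -> nth l env (e 0) = e l).
    { intros l Hl. unfold env. rewrite map_nth, seq_nth by exact Hl. reflexivity. }
    assert (Hlen : length env = N) by (unfold env; rewrite length_map, length_seq; reflexivity).
    destruct (proj1 (Hsep env (e 0) Hlen) (H env Hlen)) as [a [Ha Htr]].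
    + rewrite !Henv by lia. exact He.
    + exists a. split; auto. revert Htr. apply (separating_trace_ext le); auto.
  - intros H env Hlen. destruct env as [|d env']; [discriminate|].
    apply (Hsep _ d Hlen). apply (H (fun l => nth l (d :: env') d)).
Qed.

End Satisfaction.

Lemma models_of_separated al be {T} (le : T -> T -> Prop) :
  separated_by_filters al be le -> forall n, sat le [] (theta_sentence al be n).
Proof.
  intros Hsep n. apply sat_theta_sentence. intros e He.
  destruct (Hsep _ _ He) as [F [HF [H0 H1]]].
  destruct (exists_mask (S (S n)) (fun l => holds (F (e l)))) as [a [Ha Hbits]].
  exists a. split; auto.
  apply (separating_trace_ext le al be e e _ (fun l => holds (F (e l)))); auto.
  - lia.
  - intros l Hl. symmetry. auto.
  - apply trace_of_filter; auto.
Qed.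

Lemma separated_of_models al be {T} (le : T -> T -> Prop) :
  is_poset le -> countable T -> (forall n, sat le [] (theta_sentence al be n)) ->
  separated_by_filters al be le.
Proof.
  intros [Hrefl _] Hc Hsat p q Hpq.
  destruct (enumeration_of_countable Hc p q) as (e & pos & He0 & He1 & Hpos).
  (* Traces shorter than 2 cannot mention both [p] and [q], so they are exempted. *)
  destruct (koenig (fun N g => 2 <= N -> separating_trace le al be e N g)) as [g Hg].
  - intros M g g' Hagree H HM. apply (separating_trace_ext le al be e e M g); auto.
  - intros M M' g HMM' H HM. apply (separating_trace_le le al be e M M'); auto. apply H. lia.
  - intros [|[|n]]; [exists (fun _ => true); lia .. |].
    destruct (proj1 (sat_theta_sentence le al be n) (Hsat n) e) as [a [_ Ha]];
      [congruence | eauto].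
  - assert (Htraces : forall N, separating_trace le al be e N g).
    { intros N. apply (separating_trace_le le al be e N (S (S N))); [lia | apply Hg; lia]. }
    destruct (Htraces 0) as (Hg0 & Hg1 & _).
    exists (fun x => g (pos x) = true).
    split; [exact (filter_of_traces le al be e g Htraces pos Hpos)|]. split.
    + apply (trace_upward le al be e g Htraces 0); auto. rewrite Hpos, He0. apply Hrefl.
    + intros Hq. assert (g 1 = true) by
        (apply (trace_upward le al be e g Htraces (pos q)); auto; rewrite Hpos, He1; apply Hrefl).
      congruence.
Qed.

(** * Θ is recursive *)

Record PR (k : nat) := mkPR {
  run : list nat -> nat;
  prog : recf;
  prog_eval : forall v, k <= length v -> eval prog v (run v) }.
Arguments mkPR {k}.
Arguments run {k} _ _.
Arguments prog {k} _.
Arguments prog_eval {k} _ _ _.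

Notation "v # i" := (nth i v 0) (at level 1, no associativity).

Definition pzero k : PR k := mkPR (fun _ => 0) RZero (fun v _ => ev_zero v).

Definition psucc1 : PR 1 := mkPR (fun v => S (hd 0 v)) RSucc (fun v _ => ev_succ v).

(* Out-of-range projections default to zero, so that [proj] needs no proof of [i < k]. *)
Definition proj (i k : nat) : PR k :=
  match lt_dec i k with
  | left H => mkPR (fun v => v # i) (RProj i)
                (fun v Hv => ev_proj i v (Nat.lt_le_trans _ _ _ H Hv))
  | right _ => pzero k
  end.

Lemma run_proj i k v : i < k -> run (proj i k) v = v # i.
Proof. intros H. unfold proj. destruct (lt_dec i k); [reflexivity | lia]. Qed.

Lemma pcomp_eval {k m} (f : PR m) (gs : list (PR k)) (H : length gs = m) v :
  k <= length v -> eval (RComp (prog f) (map prog gs)) v (run f (map (fun g => run g v) gs)).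
Proof.
  intros Hv. apply ev_comp with (ys := map (fun g => run g v) gs).
  - clear H. induction gs as [|g gs IH]; constructor; auto. apply prog_eval, Hv.
  - apply prog_eval. rewrite length_map. lia.
Qed.

Definition pcomp {k m} (f : PR m) (gs : list (PR k)) (H : length gs = m) : PR k :=
  mkPR (fun v => run f (map (fun g => run g v) gs)) _ (pcomp_eval f gs H).

Lemma run_pcomp {k m} (f : PR m) (gs : list (PR k)) H v :
  run (pcomp f gs H) v = run f (map (fun g => run g v) gs).
Proof. reflexivity. Qed.

Definition prec_fun {k} (f : PR k) (g : PR (S (S k))) (v : list nat) : nat :=
  match v with
  | [] => 0
  | n :: w => nat_rect (fun _ => nat) (run f w) (fun i r => run g (i :: r :: w)) n
  end.

Lemma prec_eval {k} (f : PR k) (g : PR (S (S k))) v :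
  S k <= length v -> eval (RPrim (prog f) (prog g)) v (prec_fun f g v).
Proof.
  destruct v as [|n w]; simpl; intros Hv; [lia|].
  induction n as [|n IH]; simpl.
  - apply ev_prim0, prog_eval. lia.
  - eapply ev_primS; [apply IH | apply prog_eval; simpl; lia].
Qed.

Definition prec {k} (f : PR k) (g : PR (S (S k))) : PR (S k) :=
  mkPR (prec_fun f g) _ (prec_eval f g).

Lemma run_prec_0 {k} (f : PR k) g w : run (prec f g) (0 :: w) = run f w.
Proof. reflexivity. Qed.

Lemma run_prec_S {k} (f : PR k) g n w :
  run (prec f g) (S n :: w) = run g (n :: run (prec f g) (n :: w) :: w).
Proof. reflexivity. Qed.

Definition comp1 {k} (f : PR 1) (g : PR k) : PR k := pcomp f [g] eq_refl.
Definition comp2 {k} (f : PR 2) (g1 g2 : PR k) : PR k := pcomp f [g1; g2] eq_refl.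
Definition comp3 {k} (f : PR 3) (g1 g2 g3 : PR k) : PR k := pcomp f [g1; g2; g3] eq_refl.
Definition comp4 {k} (f : PR 4) (g1 g2 g3 g4 : PR k) : PR k :=
  pcomp f [g1; g2; g3; g4] eq_refl.

Lemma run_comp1 {k} f (g : PR k) v : run (comp1 f g) v = run f [run g v].
Proof. reflexivity. Qed.
Lemma run_comp2 {k} f (g1 g2 : PR k) v : run (comp2 f g1 g2) v = run f [run g1 v; run g2 v].
Proof. reflexivity. Qed.
Lemma run_comp3 {k} f (g1 g2 g3 : PR k) v :
  run (comp3 f g1 g2 g3) v = run f [run g1 v; run g2 v; run g3 v].
Proof. reflexivity. Qed.
Lemma run_comp4 {k} f (g1 g2 g3 g4 : PR k) v :
  run (comp4 f g1 g2 g3 g4) v = run f [run g1 v; run g2 v; run g3 v; run g4 v].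
Proof. reflexivity. Qed.

Definition psucc {k} (g : PR k) : PR k := comp1 psucc1 g.
Lemma run_psucc {k} (g : PR k) v : run (psucc g) v = S (run g v).
Proof. reflexivity. Qed.

Fixpoint pconst (c k : nat) : PR k :=
  match c with 0 => pzero k | S c => psucc (pconst c k) end.
Lemma run_pconst c k v : run (pconst c k) v = c.
Proof. induction c; simpl; auto. Qed.

Global Opaque pcomp prec proj pzero pconst psucc.

Global Hint Rewrite @run_comp1 @run_comp2 @run_comp3 @run_comp4 @run_psucc run_pconst
  @run_prec_0 @run_prec_S : run.

Ltac simpl_run :=
  repeat (progress (autorewrite with run; try (rewrite run_proj by (simpl; lia)); simpl)).

Definition padd : PR 2 := prec (proj 0 1) (psucc (proj 1 3)).
Lemma run_padd v : run padd v = v#0 + v#1.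
Proof. destruct v as [|x w]; [reflexivity|]. unfold padd. induction x; simpl_run; auto. Qed.
Global Opaque padd. Global Hint Rewrite run_padd : run.

Definition ppred : PR 1 := prec (pzero 0) (proj 0 2).
Lemma run_ppred v : run ppred v = pred (v#0).
Proof. unfold ppred. destruct v as [|[|x] w]; simpl_run; reflexivity. Qed.
Global Opaque ppred. Global Hint Rewrite run_ppred : run.

Definition psub : PR 2 := comp2 (prec (proj 0 1) (comp1 ppred (proj 1 3))) (proj 1 2) (proj 0 2).
Lemma run_psub v : run psub v = v#0 - v#1.
Proof.
  unfold psub. simpl_run. generalize (v#0) (v#1). intros x y.
  induction y; simpl_run; [lia|]. rewrite IHy. lia.
Qed.
Global Opaque psub. Global Hint Rewrite run_psub : run.

Definition pif : PR 3 := prec (proj 1 2) (proj 2 4).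
Lemma run_pif v : run pif v = match v#0 with 0 => v#2 | S _ => v#1 end.
Proof. unfold pif. destruct v as [|[|b] w]; simpl_run; reflexivity. Qed.
Global Opaque pif. Global Hint Rewrite run_pif : run.

Definition pite {k} (b x y : PR k) : PR k := comp3 pif b x y.
Lemma run_pite {k} (b x y : PR k) v :
  run (pite b x y) v = match run b v with 0 => run y v | S _ => run x v end.
Proof. unfold pite. simpl_run. reflexivity. Qed.
Global Opaque pite. Global Hint Rewrite @run_pite : run.

Definition pand {k} (x y : PR k) : PR k := pite x y (pconst 0 k).
Definition por {k} (x y : PR k) : PR k := pite x (pconst 1 k) y.
Definition pnot {k} (x : PR k) : PR k := pite x (pconst 0 k) (pconst 1 k).

Lemma run_pand {k} (x y : PR k) v :
  run (pand x y) v = match run x v with 0 => 0 | S _ => run y v end.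
Proof. unfold pand. simpl_run. reflexivity. Qed.
Lemma run_por {k} (x y : PR k) v :
  run (por x y) v = match run x v with 0 => run y v | S _ => 1 end.
Proof. unfold por. simpl_run. reflexivity. Qed.
Lemma run_pnot {k} (x : PR k) v :
  run (pnot x) v = match run x v with 0 => 1 | S _ => 0 end.
Proof. unfold pnot. simpl_run. reflexivity. Qed.
Global Opaque pand por pnot. Global Hint Rewrite @run_pand @run_por @run_pnot : run.

Ltac case_bools :=
  repeat match goal with
  | |- context [?b] =>
      lazymatch type of b with
      | bool =>
          lazymatch b with
          | true => fail | false => fail | negb _ => fail | andb _ _ => fail
          | orb _ _ => fail | implb _ _ => fail | xorb _ _ => fail
          | _ => destruct b
          end
      end
  end; simpl.

Definition peqb {k} (x y : PR k) : PR k :=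
  pite (comp2 padd (comp2 psub x y) (comp2 psub y x)) (pconst 0 k) (pconst 1 k).
Lemma run_peqb {k} (x y : PR k) v : run (peqb x y) v = Nat.b2n (run x v =? run y v).
Proof.
  unfold peqb. simpl_run.
  destruct (Nat.eqb_spec (run x v) (run y v)) as [E|E].
  - rewrite E, Nat.sub_diag. reflexivity.
  - destruct (run x v - run y v + (run y v - run x v)) eqn:D; [lia | reflexivity].
Qed.

Definition pltb {k} (x y : PR k) : PR k := pite (comp2 psub y x) (pconst 1 k) (pconst 0 k).
Lemma run_pltb {k} (x y : PR k) v : run (pltb x y) v = Nat.b2n (run x v <? run y v).
Proof.
  unfold pltb. simpl_run.
  destruct (Nat.ltb_spec (run x v) (run y v)).
  - destruct (run y v - run x v) eqn:D; [lia | reflexivity].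
  - replace (run y v - run x v) with 0 by lia. reflexivity.
Qed.

Fixpoint tri n := match n with 0 => 0 | S n => tri n + S n end.

Lemma cpair_tri a b : cpair a b = tri (a + b) + b.
Proof.
  unfold cpair. f_equal.
  assert (H : forall n, n * (n + 1) = tri n * 2) by (induction n; simpl; lia).
  rewrite H. apply Nat.div_mul. lia.
Qed.

Definition ptri : PR 1 := prec (pzero 0) (comp2 padd (proj 1 2) (psucc (proj 0 2))).
Lemma run_ptri v : run ptri v = tri (v#0).
Proof. destruct v as [|x w]; [reflexivity|]. unfold ptri. induction x; simpl_run; auto. Qed.
Global Opaque ptri. Global Hint Rewrite run_ptri : run.

Definition pcpair {k} (x y : PR k) : PR k :=
  comp2 padd (comp1 ptri (comp2 padd x y)) y.
Lemma run_pcpair {k} (x y : PR k) v : run (pcpair x y) v = cpair (run x v) (run y v).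
Proof. unfold pcpair. simpl_run. symmetry. apply cpair_tri. Qed.
Global Opaque pcpair. Global Hint Rewrite @run_pcpair : run.

Definition podd : PR 1 := prec (pzero 0) (pnot (proj 1 2)).
Lemma run_podd v : run podd v = Nat.b2n (Nat.odd (v#0)).
Proof.
  destruct v as [|x w]; [reflexivity|]. simpl. unfold podd.
  induction x; simpl_run; [reflexivity|].
  rewrite IHx, Nat.odd_succ, <- Nat.negb_odd. case_bools; reflexivity.
Qed.
Global Opaque podd. Global Hint Rewrite run_podd : run.

Definition pdiv2 : PR 1 := prec (pzero 0) (comp2 padd (proj 1 2) (comp1 podd (proj 0 2))).
Lemma run_pdiv2 v : run pdiv2 v = Nat.div2 (v#0).
Proof.
  destruct v as [|x w]; [reflexivity|]. simpl. unfold pdiv2.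
  induction x; simpl_run; auto. rewrite IHx.
  pose proof (Nat.div2_odd x) as Hx. pose proof (Nat.div2_odd (S x)) as HSx.
  rewrite Nat.odd_succ, <- Nat.negb_odd in HSx. destruct (Nat.odd x); simpl in *; lia.
Qed.
Global Opaque pdiv2. Global Hint Rewrite run_pdiv2 : run.

Definition pdiv2_iter : PR 2 := prec (proj 0 1) (comp1 pdiv2 (proj 1 3)).
Lemma run_pdiv2_iter n x : run pdiv2_iter [n; x] = Nat.iter n Nat.div2 x.
Proof. unfold pdiv2_iter. induction n; simpl_run; auto. Qed.
Global Opaque pdiv2_iter.

Lemma testbit_iter_div2 a n : Nat.testbit a n = Nat.odd (Nat.iter n Nat.div2 a).
Proof.
  revert a. induction n; intros a; auto.
  change (Nat.testbit a (S n)) with (Nat.testbit (Nat.div2 a) n).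
  rewrite IHn, Nat.iter_succ_r. reflexivity.
Qed.

Definition ptestbit {k} (a l : PR k) : PR k := comp1 podd (comp2 pdiv2_iter l a).
Lemma run_ptestbit {k} (a l : PR k) v :
  run (ptestbit a l) v = Nat.b2n (Nat.testbit (run a v) (run l v)).
Proof. unfold ptestbit. simpl_run. rewrite run_pdiv2_iter, testbit_iter_div2. reflexivity. Qed.
Global Opaque ptestbit. Global Hint Rewrite @run_ptestbit : run.

Definition ppow2 : PR 1 := prec (pconst 1 0) (comp2 padd (proj 1 2) (proj 1 2)).
Lemma run_ppow2 x w : run ppow2 (x :: w) = 2 ^ x.
Proof. unfold ppow2. induction x; simpl_run; auto. rewrite IHx. lia. Qed.
Global Opaque ppow2. Global Hint Rewrite run_ppow2 : run.

Definition ppopcount : PR 2 :=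
  prec (pzero 1) (comp2 padd (proj 1 3) (ptestbit (proj 2 3) (proj 0 3))).
Lemma run_ppopcount N L : run ppopcount [N; L] = popcount N L.
Proof. unfold ppopcount. induction N; simpl_run; auto. Qed.
Global Opaque ppopcount. Global Hint Rewrite run_ppopcount : run.

Definition plt_card (c : cardp) : PR 1 :=
  match c with Fin m => pltb (proj 0 1) (pconst m 1) | Omega => pconst 1 1 end.
Lemma run_plt_card c n : run (plt_card c) [n] = Nat.b2n (lt_card c n).
Proof. destruct c; simpl; [rewrite run_pltb|]; simpl_run; reflexivity. Qed.
Global Opaque plt_card. Global Hint Rewrite run_plt_card : run.

Definition ptestbit_pol {k} (fl : bool) (a l : PR k) : PR k :=
  if fl then pnot (ptestbit a l) else ptestbit a l.
Lemma run_ptestbit_pol {k} fl (a l : PR k) v :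
  run (ptestbit_pol fl a l) v = Nat.b2n (testbit_pol fl (run a v) (run l v)).
Proof. destruct fl; simpl_run; case_bools; reflexivity. Qed.
Global Opaque ptestbit_pol. Global Hint Rewrite @run_ptestbit_pol : run.

Definition pall_bits (fl : bool) : PR 3 :=
  prec (pconst 1 2) (pand (proj 1 4)
    (pite (ptestbit (proj 2 4) (proj 0 4)) (ptestbit_pol fl (proj 3 4) (proj 0 4)) (pconst 1 4))).
Lemma run_pall_bits fl N L a :
  run (pall_bits fl) [N; L; a] = Nat.b2n (all_bits N L (testbit_pol fl a)).
Proof.
  unfold pall_bits. induction N; simpl_run; auto. rewrite IHN. case_bools; reflexivity.
Qed.
Global Opaque pall_bits. Global Hint Rewrite run_pall_bits : run.

Definition psearch (g : PR 1) : PR 2 :=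
  prec (peqb (comp1 g (pconst 0 1)) (proj 0 1))
       (por (proj 1 3) (peqb (comp1 g (psucc (proj 0 3))) (proj 2 3))).
Lemma run_psearch g m x :
  run (psearch g) [m; x] = Nat.b2n (existsb (fun n => run g [n] =? x) (seq 0 (S m))).
Proof.
  unfold psearch. induction m.
  - simpl_run. rewrite run_peqb. simpl_run. rewrite orb_false_r. reflexivity.
  - rewrite run_prec_S, seq_S, existsb_app. simpl existsb. rewrite orb_false_r.
    simpl_run. rewrite IHm, run_peqb. simpl_run. case_bools; reflexivity.
Qed.

Lemma recursive_range (g : PR 1) :
  (forall n, n <= run g [n]) -> recursive_nat_set (fun x => exists n, run g [n] = x).
Proof.
  intros Hg. set (d := comp2 (psearch g) (proj 0 1) (proj 0 1)).
  exists (prog d). intros x.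
  pose proof (prog_eval d [x] (le_n 1)) as H.
  unfold d in H. rewrite run_comp2, !run_proj, run_psearch in H by lia. simpl nth in H.
  assert (Hb : existsb (fun n => run g [n] =? x) (seq 0 (S x)) = true <-> exists n, run g [n] = x).
  { rewrite existsb_exists. split.
    - intros [n [_ Hn]]. apply Nat.eqb_eq in Hn. eauto.
    - intros [n Hn]. exists n. rewrite in_seq, Nat.eqb_eq. specialize (Hg n). lia. }
  destruct (existsb _ _); split; intros Hx; auto.
  - exfalso. apply Hx, Hb. reflexivity.
  - apply Hb in Hx. discriminate.
Qed.

Definition pbin {k} (tag : nat) (x y : PR k) : PR k := pcpair (pconst tag k) (pcpair x y).
Lemma run_pbin {k} tag (x y : PR k) v :
  run (pbin tag x y) v = cpair tag (cpair (run x v) (run y v)).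
Proof. unfold pbin. simpl_run. reflexivity. Qed.

Definition pFAll {k} (x : PR k) : PR k := pcpair (pconst 6 k) x.
Lemma run_pFAll {k} (x : PR k) v : run (pFAll x) v = cpair 6 (run x v).
Proof. unfold pFAll. simpl_run. reflexivity. Qed.

Definition pformula {k} (X : formula) : PR k := pconst (code X) k.
Lemma run_pformula {k} X v : run (@pformula k X) v = code X.
Proof. apply run_pconst. Qed.

Global Opaque pbin pFAll pformula.
Global Hint Rewrite @run_pbin @run_pFAll @run_pformula : run.

Notation pFLe := (pbin 1).
Notation pFImp := (pbin 3).
Notation pFAnd := (pbin 4).
Notation pFNeg x := (pbin 3 x (pformula FBot)).

Definition shift_args np : list (PR (S (S np))) :=
  proj 0 (S (S np)) :: map (fun j => proj (S (S j)) (S (S np))) (seq 0 np).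

Lemma length_shift_args np : length (shift_args np) = S np.
Proof. simpl. rewrite length_map, length_seq. reflexivity. Qed.

Lemma run_shift_args np i r w : length w = np ->
  map (fun g => run g (i :: r :: w)) (shift_args np) = i :: w.
Proof.
  intros <-. simpl. rewrite run_proj by lia. f_equal. rewrite map_map.
  transitivity (map (fun j => w # j) (seq 0 (length w))).
  - apply map_ext_in. intros j Hj. apply in_seq in Hj. rewrite run_proj by lia. reflexivity.
  - clear. induction w as [|x w IH]; [reflexivity|].
    simpl. f_equal. rewrite <- seq_shift, map_map. exact IH.
Qed.

(* In the recursion the arguments are [i :: acc :: w]; [shift_args] drops [acc] to call [G]. *)
Definition pbig (tag : nat) (unit : formula) np (G : PR (S np)) : PR (S np) :=
  prec (pformula unit)
       (pbin tag (pcomp G (shift_args np) (length_shift_args np)) (proj 1 (S (S np)))).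

Lemma run_pbig op unit tag np (G : PR (S np)) (F : nat -> formula) w :
  (forall X Y, code (op X Y) = cpair tag (cpair (code X) (code Y))) ->
  length w = np -> (forall i, run G (i :: w) = code (F i)) ->
  forall m, run (pbig tag unit np G) (m :: w) = code (big op unit m F).
Proof.
  intros Hop Hw HG m. unfold pbig. induction m; simpl_run; [reflexivity|].
  rewrite run_pcomp, run_shift_args, HG, IHm by exact Hw. symmetry. apply Hop.
Qed.

Definition pBigAnd np (G : PR (S np)) : PR (S np) := pbig 4 FTop np G.
Definition pBigOr np (G : PR (S np)) : PR (S np) := pbig 5 FBot np G.

Lemma run_pBigAnd np (G : PR (S np)) F w m : length w = np ->
  (forall i, run G (i :: w) = code (F i)) -> run (pBigAnd np G) (m :: w) = code (BigAnd m F).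
Proof. intros. apply run_pbig; auto. Qed.

Lemma run_pBigOr np (G : PR (S np)) F w m : length w = np ->
  (forall i, run G (i :: w) = code (F i)) -> run (pBigOr np G) (m :: w) = code (BigOr m F).
Proof. intros. apply run_pbig; auto. Qed.

Global Opaque pBigAnd pBigOr.

Definition pFLe_pol {k} (fl : bool) (x y : PR k) : PR k :=
  if fl then pFLe y x else pFLe x y.
Lemma run_pFLe_pol {k} fl (x y : PR k) v :
  run (pFLe_pol fl x y) v = code (FLe_pol fl (run x v) (run y v)).
Proof. destruct fl; simpl; simpl_run; reflexivity. Qed.
Global Opaque pFLe_pol. Global Hint Rewrite @run_pFLe_pol : run.

Definition pglb_formula (fl : bool) : PR 3 :=
  pFAnd
    (pBigAnd 2 (pite (ptestbit (proj 2 3) (proj 0 3))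
                     (pFLe_pol fl (proj 1 3) (proj 0 3)) (pformula FTop)))
    (pFAll (pFImp
       (comp2 (pBigAnd 1 (pite (ptestbit (proj 1 2) (proj 0 2))
                               (pFLe_pol fl (pconst 0 2) (psucc (proj 0 2))) (pformula FTop)))
              (proj 0 3) (proj 2 3))
       (pFLe_pol fl (pconst 0 3) (psucc (proj 1 3))))).

Lemma run_pglb_formula fl N k L :
  run (pglb_formula fl) [N; k; L] = code (glb_formula fl N k L).
Proof.
  unfold pglb_formula, glb_formula. simpl_run.
  erewrite run_pBigAnd, run_pBigAnd; [reflexivity| | | |];
    try reflexivity; intros l; simpl_run; case_bools; reflexivity.
Qed.
Global Opaque pglb_formula. Global Hint Rewrite run_pglb_formula : run.

Definition pavoid_formula (fl : bool) (c : cardp) : PR 2 :=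
  let test : PR 4 :=
    pand (pand (comp1 (plt_card c) (comp2 ppopcount (proj 1 4) (proj 0 4)))
               (comp3 (pall_bits fl) (proj 1 4) (proj 0 4) (proj 2 4)))
         (pnot (ptestbit_pol fl (proj 2 4) (proj 3 4))) in
  let row : PR 4 :=
    pite test (pFNeg (comp3 (pglb_formula fl) (proj 1 4) (proj 3 4) (proj 0 4))) (pformula FTop) in
  comp3 (pBigAnd 2 (comp4 (pBigAnd 3 row)
                          (comp1 ppow2 (proj 1 3)) (proj 1 3) (proj 2 3) (proj 0 3)))
        (proj 0 2) (proj 0 2) (proj 1 2).

Lemma run_pavoid_formula fl c N a :
  run (pavoid_formula fl c) [N; a] = code (avoid_formula fl c N a).
Proof.
  unfold pavoid_formula, avoid_formula. simpl_run.
  erewrite run_pBigAnd; [reflexivity|reflexivity|]. intros k. simpl_run.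
  erewrite run_pBigAnd; [reflexivity|reflexivity|]. intros L. simpl_run.
  case_bools; reflexivity.
Qed.
Global Opaque pavoid_formula. Global Hint Rewrite run_pavoid_formula : run.

Definition pmono_formula : PR 2 :=
  let row : PR 3 :=
    pite (pand (ptestbit (proj 1 3) (proj 2 3)) (pnot (ptestbit (proj 1 3) (proj 0 3))))
         (pFNeg (pFLe (proj 2 3) (proj 0 3))) (pformula FTop) in
  comp3 (pBigAnd 2 (comp3 (pBigAnd 2 row) (proj 1 3) (proj 2 3) (proj 0 3)))
        (proj 0 2) (proj 0 2) (proj 1 2).

Lemma run_pmono_formula N a : run pmono_formula [N; a] = code (mono_formula N a).
Proof.
  unfold pmono_formula, mono_formula. simpl_run.
  erewrite run_pBigAnd; [reflexivity|reflexivity|]. intros k. simpl_run.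
  erewrite run_pBigAnd; [reflexivity|reflexivity|]. intros l. simpl_run.
  case_bools; reflexivity.
Qed.
Global Opaque pmono_formula. Global Hint Rewrite run_pmono_formula : run.

Definition ptrace_formula (al be : cardp) : PR 2 :=
  pite (pand (ptestbit (proj 0 2) (pconst 0 2)) (pnot (ptestbit (proj 0 2) (pconst 1 2))))
       (pFAnd (comp2 pmono_formula (proj 1 2) (proj 0 2))
          (pFAnd (comp2 (pavoid_formula false al) (proj 1 2) (proj 0 2))
                  (comp2 (pavoid_formula true be) (proj 1 2) (proj 0 2))))
       (pformula FBot).

Definition pseparation_formula (al be : cardp) : PR 1 :=
  pFImp (pformula (FNeg (FLe 0 1)))
         (comp2 (pBigOr 1 (ptrace_formula al be)) (comp1 ppow2 (proj 0 1)) (proj 0 1)).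

Lemma run_pseparation_formula al be N :
  run (pseparation_formula al be) [N] = code (separation_formula al be N).
Proof.
  unfold pseparation_formula, separation_formula. simpl_run.
  erewrite run_pBigOr; [reflexivity|reflexivity|]. intros a.
  unfold ptrace_formula, trace_formula. simpl_run. case_bools; reflexivity.
Qed.
Global Opaque pseparation_formula. Global Hint Rewrite run_pseparation_formula : run.

Definition pFAlls : PR 2 := prec (proj 0 1) (pFAll (proj 1 3)).
Lemma run_pFAlls m X : run pFAlls [m; code X] = code (FAlls m X).
Proof. unfold pFAlls. induction m; simpl_run; [reflexivity|]. rewrite IHm. reflexivity. Qed.

Definition ptheta_sentence (al be : cardp) : PR 1 :=
  comp2 pFAlls (psucc (psucc (proj 0 1)))
        (comp1 (pseparation_formula al be) (psucc (psucc (proj 0 1)))).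

Lemma run_ptheta_sentence al be n :
  run (ptheta_sentence al be) [n] = code (theta_sentence al be n).
Proof.
  unfold ptheta_sentence. rewrite run_comp2, run_comp1, !run_psucc, run_proj by lia.
  rewrite run_pseparation_formula. apply run_pFAlls.
Qed.

Lemma lt_code_FAll p : code p < code (FAll p).
Proof.
  simpl. rewrite cpair_tri. enough (1 <= tri (6 + code p)) by lia.
  simpl. lia.
Qed.

Lemma le_code_FAlls m p : m <= code (FAlls m p).
Proof.
  induction m; [lia|]. unfold FAlls in *. rewrite Nat.iter_succ.
  pose proof (lt_code_FAll (Nat.iter m FAll p)). lia.
Qed.

Lemma theta_recursive al be :
  recursive_formula_set (fun f => exists n, f = theta_sentence al be n).
Proof.
  assert (Hrec := recursive_range (ptheta_sentence al be)).
  destruct Hrec as [e He].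
  { intros n. rewrite run_ptheta_sentence. unfold theta_sentence.
    pose proof (le_code_FAlls (S (S n)) (separation_formula al be (S (S n)))). lia. }
  exists e. intros x. specialize (He x). setoid_rewrite run_ptheta_sentence in He.
  split; intros Hx; apply He.
  - destruct Hx as [f [[n ->] <-]]. eauto.
  - intros [n <-]. apply Hx. eauto.
Qed.

Theorem proposition6p4 (alpha beta : cardp) (ha : ge2 alpha) (hb : ge2 beta) :
  exists Theta : formula -> Prop,
    (forall f, Theta f -> sentence f) /\
    recursive_formula_set Theta /\
    (forall (T : Type) (le : T -> T -> Prop),
        is_poset le -> countable T ->
        (models le Theta <-> representable alpha beta le)).
Proof.
  (* The construction works for all cardinal parameters. *)
  exists (fun f => exists n, f = theta_sentence alpha beta n). split; [|split].
  - intros f [n ->]. apply theta_sentence_closed.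
  - apply theta_recursive.
  - intros T le Hpo Hc. rewrite representable_iff_separated. split.
    + intros Hm. apply separated_of_models; auto. intros n. apply Hm. eauto.
    + intros Hsep f [n ->]. apply models_of_separated, Hsep.
Qed.
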